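(* In the reduction instance $NTP([a_j]_{j\in A},W)$, there exists $A'\subseteq A$ such that the block schedule $S(A')$ is an optimal schedule.
   Context: Reduction instance. Let $N\ge1$, $A=\{1,\dots,N\}$, positive integers $a_1,\dots,a_N$, positive integer $W\le\sum_{j\in A}a_j$. Set $M=N+\sum_{j\in A}a_j+1$, employees $\mathcal E=\{1,\dots,M\}$ (smaller index = more senior). For $k\in A$: $i_k=k+\sum_{j=1}^{k-1}a_j$ (critical employees), $\mathcal E^S_k=\{i: i_k<i\le i_k+a_k\}$ (stable block). Response delays: $r_{i_k}=\sum_{j=1}^{k}a_j$; for $i\in\mathcal E^S_k$, $r_i=\sum_{j=1}^{k-1}a_j$; $r_M=\sum_{j\in A}a_j$. Let $C^*_0=2\sum_j a_j$ and $H=C^*_0-W$. A schedule $S=(s_i,e_i)_{i\in\mathcal E}$ has $s_i\ge0$, $e_i=s_i+r_i$; it is feasible if $s_1\le\dots\le s_M$ and $e_i\le H$ for all $i$. $b_i=|\{j: i<j,\ e_j<e_i\}|$, $B(S)=\sum_i b_i$. A schedule is optimal if it is feasible and minimizes $B(S)$ among feasible schedules. Block schedule $S(A')$, $A'\subseteq A$: $s_1=0$; for $i\ge2$, $s_i=s_{i_k}+a_k$ if $i=i_k+1$ for some $k\in A\setminus A'$, and $s_i=s_{i-1}$ otherwise; $e_i=s_i+r_i$. *)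

From HB Require Import structures.
From mathcomp Require Import all_boot all_order all_algebra.
From mathcomp Require Import reals.
Set Implicit Arguments. Unset Strict Implicit. Unset Printing Implicit Defensive.
Import Order.TTheory GRing.Theory Num.Theory.

Section NTP.
Variables (N : nat) (a : nat -> nat).

Definition psum (k : nat) : nat := \sum_(1 <= j < k.+1) a j.
Definition sumA : nat := psum N.
Definition M : nat := N + sumA + 1.
Definition crit (k : nat) : nat := k + psum k.-1.
Definition is_crit (i : nat) : bool := has (fun k => crit k == i) (iota 1 N).
(* the block index k with i_k <= i <= i_k + a_k (for 1 <= i <= M-1) *)
Definition blk (i : nat) : nat := \max_(1 <= k < N.+1 | crit k <= i) k.

Definition resp (i : nat) : nat :=
  if i == M then sumA
  else if is_crit i then psum (blk i)
  else psum (blk i).-1.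

Variables (R : realType) (W : nat).
Local Open Scope ring_scope.

Definition H : R := 2 * (sumA%:R) - W%:R.
Definition endt (s : nat -> R) (i : nat) : R := s i + (resp i)%:R.

Definition feasible (s : nat -> R) : Prop :=
  (forall i, (1 <= i <= M)%N -> 0 <= s i) /\
  (forall i, (1 <= i < M)%N -> s i <= s i.+1) /\
  (forall i, (1 <= i <= M)%N -> endt s i <= H).

Local Close Scope ring_scope.
Definition Bcost (s : nat -> R) : nat :=
  \sum_(1 <= i < M.+1) \sum_(i.+1 <= j < M.+1) nat_of_bool (endt s j < endt s i)%R.

Local Open Scope ring_scope.
Definition optimal (s : nat -> R) : Prop :=
  feasible s /\ forall s', feasible s' -> (Bcost s <= Bcost s')%N.

Fixpoint block_start (A' : pred nat) (i : nat) : R :=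
  match i with
  | 0 => 0
  | j.+1 => if j == 0%N then 0
            else block_start A' j +
                 (if is_crit j && ~~ A' (blk j) then (a (blk j))%:R else 0)
  end.

End NTP.

From HB Require Import structures.
From mathcomp Require Import all_boot all_order all_algebra.
From mathcomp Require Import reals.
From mathcomp Require Import zify lra.
Import Order.TTheory GRing.Theory Num.Theory.

(* Call block k of a feasible schedule s delayed when s_(i_k + a_k) - s_(i_k) >= a_k.
   Start times are nondecreasing and s_M + r_M <= H = 2 sum_j a_j - W, so the
   delayed blocks weigh at most sum_j a_j - W.  In a block that is not delayed,
   all a_k stable employees finish strictly before i_k, so B(s) is at least the
   weight of the blocks that are not delayed.  The block schedule delaying
   exactly a set D of weight at most sum_j a_j - W is feasible and has no other
   inversions, so taking for D a heaviest such set (a knapsack optimum) yields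
   an optimal schedule. *)

Lemma leq_sum_map_inj (I J : eqType) (r : seq I) (r' : seq J) (P : pred I)
    (f : I -> J) (F : J -> nat) :
  uniq r -> uniq r' -> {in r &, injective f} ->
  (forall i, i \in r -> P i -> f i \in r') ->
  \sum_(i <- r | P i) F (f i) <= \sum_(j <- r') F j.
Proof.
move=> ur ur' finj fr'; rewrite -big_filter -(big_map f xpredT).
apply: (@uniq_sub_le_big _ addn _ leqnn (fun x y => leq_addr y x)) => //.
  rewrite map_inj_in_uniq ?filter_uniq // => x y.
  by rewrite !mem_filter => /andP[_ xr] /andP[_ yr]; apply: finj.
by move=> j /mapP[i]; rewrite mem_filter => /andP[Pi ri] ->; apply: fr'.
Qed.

Lemma leq_sum_support (I : eqType) (r s : seq I) (F : I -> nat) :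
  uniq r -> uniq s -> (forall i, i \in r -> i \notin s -> F i = 0) ->
  \sum_(i <- r) F i <= \sum_(i <- s) F i.
Proof.
move=> ur us F0; rewrite (bigID (fun i => i \notin s)) /= big1_seq ?add0n; last first.
  by move=> i /andP[ns ir]; apply: F0.
rewrite -big_filter.
apply: (@uniq_sub_le_big _ addn _ leqnn (fun x y => leq_addr y x)) => //.
  exact: filter_uniq.
by move=> i; rewrite mem_filter negbK => /andP[].
Qed.

Lemma sum_ltn_le m n c : \sum_(m <= j < n) (j < c) <= minn n c - m.
Proof.
elim: n => [|n IH]; first by rewrite big_geq.
case: (ltnP n m) => [nm|mn]; first by rewrite big_geq.
by rewrite big_nat_recr //=; case: (ltnP n c) => /= nc; lia.
Qed.

Lemma sum_predC (I : Type) (r : seq I) (P : pred I) (F : I -> nat) :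
  \sum_(i <- r | ~~ P i) F i = \sum_(i <- r) F i - \sum_(i <- r | P i) F i.
Proof. by rewrite [X in X - _](bigID P) /= addKn. Qed.

Lemma exists_max_subset_sum n (F : nat -> nat) C :
  exists D : pred nat, \sum_(1 <= k < n.+1 | D k) F k <= C /\
    forall q : pred nat, \sum_(1 <= k < n.+1 | q k) F k <= C ->
      \sum_(1 <= k < n.+1 | q k) F k <= \sum_(1 <= k < n.+1 | D k) F k.
Proof.
pose weight (f : {ffun 'I_n.+1 -> bool}) := \sum_(1 <= k < n.+1 | f (inord k)) F k.
have fits0 : weight [ffun => false] <= C.
  by rewrite /weight big_pred0 // => k; rewrite ffunE.
have [f fits maxf] := @arg_maxnP _ _ (fun f => weight f <= C) weight fits0.
exists (fun k => f (inord k)); split => // q hq.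
have wq : \sum_(1 <= k < n.+1 | q k) F k = weight [ffun i : 'I_n.+1 => q (val i)].
  by apply: congr_big_nat => // k /andP[_ kn]; rewrite ffunE /= inordK.
by rewrite wq; apply: maxf; rewrite -wq.
Qed.

Section Blocks.
Variables (N : nat) (a : nat -> nat).

Lemma psum0 : psum a 0 = 0.
Proof. by rewrite /psum big_geq. Qed.

Lemma psumS k : psum a k.+1 = psum a k + a k.+1.
Proof. by rewrite /psum big_nat_recr. Qed.

Lemma psum_pred k : 0 < k -> psum a k = psum a k.-1 + a k.
Proof. by case: k => // k _; rewrite psumS. Qed.

Lemma leq_psum m n : m <= n -> psum a m <= psum a n.
Proof.
move=> /subnKC <-; elim: (n - m) => [|d IH]; first by rewrite addn0.
by rewrite addnS psumS (leq_trans IH) // leq_addr.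
Qed.

Lemma crit1 : crit a 1 = 1.
Proof. by rewrite /crit /= psum0. Qed.

Lemma critS k : 0 < k -> crit a k.+1 = crit a k + a k + 1.
Proof. by case: k => // k _; rewrite /crit /= psumS; lia. Qed.

Lemma crit_last : crit a N.+1 = M N a.
Proof. by rewrite /crit /M /sumA /=; lia. Qed.

Lemma ltn_crit [k k'] : k < k' -> crit a k < crit a k'.
Proof. by move=> lt; have := leq_psum (k.-1) (k'.-1) ltac:(lia); rewrite /crit; lia. Qed.

Lemma leq_crit [k k'] : k <= k' -> crit a k <= crit a k'.
Proof. by rewrite leq_eqVlt => /predU1P[-> // | /ltn_crit /ltnW]. Qed.

Lemma leq_id_crit k : k <= crit a k.
Proof. exact: leq_addr. Qed.

Lemma leq_crit_last [k] : k <= N -> crit a k.+1 <= M N a.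
Proof. by move=> kN; rewrite -crit_last leq_crit. Qed.

Lemma crit_inj : injective (crit a).
Proof. by move=> k k' e; case: (ltngtP k k') => // /ltn_crit; rewrite e ltnn. Qed.

Lemma exists_block i : 1 <= i < M N a ->
  exists k, 1 <= k <= N /\ crit a k <= i < crit a k.+1.
Proof.
rewrite -crit_last; elim: N => [|n IH] hi; first by rewrite crit1 in hi; lia.
case: (ltnP i (crit a n.+1)) => h.
- by have [k [hk hik]] := IH ltac:(lia); exists k; split => //; lia.
- by exists n.+1; split => //; lia.
Qed.

Section InBlock.
Variables (k i : nat).
Hypotheses (hk : 1 <= k <= N) (hi : crit a k <= i < crit a k.+1).

Lemma is_crit_block : is_crit N a i = (i == crit a k).
Proof.
apply/hasP/eqP => [[k' /[!mem_iota] hk' /eqP ik'] | ->]; last first.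
  by exists k; rewrite ?mem_iota; lia.
rewrite -ik'; congr crit; case: (ltngtP k' k) => // h.
- by have := ltn_crit h; lia.
- by have := leq_crit h; lia.
Qed.

Lemma blk_block : blk N a i = k.
Proof.
apply/eqP; rewrite eqn_leq; apply/andP; split.
- apply/bigmax_leqP_seq => k'; rewrite mem_index_iota => hk' hc.
  by case: (leqP k' k) => // h; have := leq_crit h; lia.
- by apply: (@leq_bigmax_seq _ _ _ id); rewrite ?mem_index_iota; lia.
Qed.

Lemma resp_block : resp N a i = if i == crit a k then psum a k else psum a k.-1.
Proof.
have iM : (i == M N a) = false.
  by apply/negbTE; rewrite -crit_last; have := @leq_crit k.+1 N.+1 ltac:(lia); lia.
by rewrite /resp iM is_crit_block blk_block.
Qed.

End InBlock.

Lemma resp_last : resp N a (M N a) = sumA N a.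
Proof. by rewrite /resp eqxx. Qed.

End Blocks.

Arguments is_crit_block {N a k i}.
Arguments blk_block {N a k i}.
Arguments resp_block {N a k i}.

Local Open Scope ring_scope.

Section Schedules.
Variables (N : nat) (a : nat -> nat) (R : realType) (W : nat).

Definition inversions (s : nat -> R) (i : nat) : nat :=
  (\sum_(i.+1 <= j < (M N a).+1) (endt N a s j < endt N a s i)%R)%N.

Definition delayed (s : nat -> R) (k : nat) : bool :=
  (a k)%:R <= s (crit a k + a k)%N - s (crit a k).

Lemma feasible_start_mono (s : nat -> R) : feasible N a W s ->
  forall i j, (1 <= i <= j)%N -> (j <= M N a)%N -> s i <= s j.
Proof.
move=> [_ [s_mono _]] i j /andP[i1 /subnKC <-].
elim: (j - i)%N => [|d IH] hd; first by rewrite addn0.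
by rewrite addnS; apply: le_trans (IH ltac:(lia)) _; apply: s_mono; lia.
Qed.

Lemma delayed_weight_le_span (s : nat -> R) n : feasible N a W s -> (n <= N)%N ->
  (\sum_(1 <= k < n.+1 | delayed s k) a k)%:R <= s (crit a n.+1) - s 1%N.
Proof.
move=> hf; elim: n => [|n IH] hn; first by rewrite big_geq // crit1 subrr.
rewrite big_mkcond big_nat_recr //= -big_mkcond natrD.
have IHn := IH ltac:(lia).
have mono := @feasible_start_mono s hf.
have hc := critS a n.+1 isT.
have c1 := leq_id_crit a n.+1.
have cM := leq_crit_last N a hn.
have m1 : s (crit a n.+1 + a n.+1)%N <= s (crit a n.+2) by apply: mono; lia.
have m2 : s (crit a n.+1) <= s (crit a n.+1 + a n.+1)%N by apply: mono; lia.
by rewrite /delayed; case: ifP => [hD | _]; lra.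
Qed.

Lemma delayed_weight_le (s : nat -> R) : feasible N a W s ->
  (\sum_(1 <= k < N.+1 | delayed s k) a k + W <= sumA N a)%N.
Proof.
move=> hf; have := @delayed_weight_le_span s N hf (leqnn N); rewrite crit_last.
have [s_ge0 [_ endt_le]] := hf.
have s1 : 0 <= s 1%N by apply: s_ge0; rewrite /M; lia.
have := endt_le (M N a) ltac:(rewrite /M; lia).
by rewrite /endt resp_last /H -(ler_nat R) natrD; lra.
Qed.

Lemma inversions_crit_ge (s : nat -> R) k : feasible N a W s -> (1 <= k <= N)%N ->
  ~~ delayed s k -> (a k <= inversions s (crit a k))%N.
Proof.
move=> hf hk hD; have hc := critS a k ltac:(lia).
have cM := @leq_crit_last N a k ltac:(lia).
rewrite /inversions (@big_cat_nat _ _ _ (crit a k + a k).+1) /=; [|lia|lia].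
apply: leq_trans (leq_addr _ _).
rewrite (@eq_big_nat _ _ _ _ _ _ (fun=> 1%N)) ?sum_nat_const_nat; first lia.
move=> j hj; have jk : (crit a k <= j < crit a k.+1)%N by lia.
have kk : (crit a k <= crit a k < crit a k.+1)%N by lia.
rewrite /endt (resp_block hk jk) (resp_block hk kk) eqxx.
have -> : (j == crit a k) = false by apply/negbTE; lia.
rewrite (psum_pred a k) ?natrD; last lia.
have m1 : s j <= s (crit a k + a k)%N by apply: (@feasible_start_mono s hf); lia.
move: hD; rewrite /delayed -ltNge => hD.
suff -> : s j + (psum a k.-1)%:R < s (crit a k) + ((psum a k.-1)%:R + (a k)%:R) by [].
lra.
Qed.

Lemma Bcost_ge (s : nat -> R) : feasible N a W s ->
  (\sum_(1 <= k < N.+1 | ~~ delayed s k) a k <= Bcost N a s)%N.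
Proof.
move=> hf.
apply: (@leq_trans (\sum_(1 <= k < N.+1 | ~~ delayed s k) inversions s (crit a k))%N).
  rewrite big_nat_cond [X in (_ <= X)%N]big_nat_cond.
  by apply: leq_sum => k /andP[hk hD]; apply: (@inversions_crit_ge s k hf _ hD); lia.
apply: (@leq_sum_map_inj _ _ _ _ _ (crit a) (inversions s)); rewrite ?iota_uniq //.
  by move=> k k' _ _; apply: crit_inj.
move=> k /[!mem_index_iota] hk _.
have := @ltn_crit a k N.+1 ltac:(lia); have := leq_id_crit a k.
by rewrite crit_last; lia.
Qed.

End Schedules.

Arguments delayed_weight_le {N a R W s}.
Arguments Bcost_ge {N a R W s}.

Section BlockSchedule.
Variables (N : nat) (a : nat -> nat) (R : realType) (D : pred nat).

Definition undelayed : pred nat := fun k => (1 <= k <= N)%N && ~~ D k.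
Definition bsched : nat -> R := block_start N a R undelayed.
Definition delay_sum (n : nat) : nat := (\sum_(1 <= k < n.+1 | D k) a k)%N.
Definition end_level (n : nat) : nat := (delay_sum n + psum a n)%N.

Lemma delay_sumS k : (0 < k)%N ->
  delay_sum k = (delay_sum k.-1 + (if D k then a k else 0))%N.
Proof.
by case: k => // k _; rewrite /delay_sum big_mkcond big_nat_recr //= -big_mkcond.
Qed.

Lemma leq_delay_sum m n : (m <= n)%N -> (delay_sum m <= delay_sum n)%N.
Proof.
move=> /subnKC <-; elim: (n - m)%N => [|d IH]; first by rewrite addn0.
by rewrite addnS (delay_sumS (m + d).+1) //=; lia.
Qed.

Lemma leq_end_level m n : (m <= n)%N -> (end_level m <= end_level n)%N.
Proof. by move=> mn; rewrite leq_add ?leq_delay_sum ?leq_psum. Qed.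

Lemma bsched_step j : (0 < j)%N -> bsched j.+1 =
  bsched j + (if is_crit N a j && ~~ undelayed (blk N a j)
              then (a (blk N a j))%:R else 0).
Proof. by case: j. Qed.

Lemma bsched_ge0 i : 0 <= bsched i.
Proof.
elim: i => [|i IH] //=; rewrite /bsched /=; case: ifP => // _.
by apply: addr_ge0 => //; case: ifP => // _; apply: ler0n.
Qed.

Lemma bsched_inner k t : (1 <= k <= N)%N -> (t <= a k)%N ->
  bsched (crit a k + t).+1 = bsched (crit a k) + (if D k then a k else 0)%:R.
Proof.
move=> hk; have hc := critS a k ltac:(lia).
elim: t => [|t IH] ht.
- rewrite addn0 bsched_step; last by have := leq_id_crit a k; lia.
  have kk : (crit a k <= crit a k < crit a k.+1)%N by lia.
  rewrite (is_crit_block hk kk) (blk_block hk kk) eqxx /undelayed hk /= negbK.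
  by case: (D k).
- have kt : (crit a k <= (crit a k + t).+1 < crit a k.+1)%N by lia.
  rewrite addnS bsched_step // (is_crit_block hk kt).
  have -> : ((crit a k + t).+1 == crit a k) = false by apply/negbTE; lia.
  by rewrite addr0 IH //; lia.
Qed.

Lemma bsched_crit k : (1 <= k <= N.+1)%N -> bsched (crit a k) = (delay_sum k.-1)%:R.
Proof.
elim: k => [|[|k] IH] hk //; first by rewrite crit1 /delay_sum big_geq.
rewrite critS // addn1 bsched_inner; [|lia|lia].
by rewrite IH ?(delay_sumS k.+1) ?natrD //; lia.
Qed.

Section InBlock.
Variables (k i : nat).
Hypotheses (hk : (1 <= k <= N)%N) (hi : (crit a k <= i < crit a k.+1)%N).

Lemma bsched_block :
  bsched i = (if i == crit a k then delay_sum k.-1 else delay_sum k)%:R.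
Proof.
case: eqP => [->|ne]; first by apply: bsched_crit; lia.
have hc := critS a k ltac:(lia).
have -> : i = (crit a k + (i - crit a k).-1).+1 by lia.
rewrite bsched_inner; [|lia|lia].
by rewrite bsched_crit ?(delay_sumS k) ?natrD //; lia.
Qed.

Lemma endt_bsched_block : endt N a bsched i =
  (if i == crit a k then delay_sum k.-1 + psum a k else delay_sum k + psum a k.-1)%:R.
Proof. by rewrite /endt bsched_block (resp_block hk hi); case: ifP; rewrite natrD. Qed.

Lemma endt_bsched_bounds :
  (end_level k.-1)%:R <= endt N a bsched i <= (end_level k)%:R.
Proof.
rewrite endt_bsched_block !ler_nat /end_level.
have := delay_sumS k ltac:(lia); have := psum_pred a k ltac:(lia).
by case: (D k); case: (i == crit a k); lia.
Qed.

End InBlock.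

Arguments endt_bsched_block {k i}.
Arguments endt_bsched_bounds {k i}.

Lemma endt_bsched_last : endt N a bsched (M N a) = (end_level N)%:R.
Proof.
by rewrite /endt resp_last natrD -(crit_last N) bsched_crit //; lia.
Qed.

Lemma endt_bsched_le_later k i j : (1 <= k <= N)%N ->
  (crit a k <= i < crit a k.+1)%N -> (crit a k.+1 <= j <= M N a)%N ->
  endt N a bsched i <= endt N a bsched j.
Proof.
move=> hk hi hj; have /andP[_ ei] := endt_bsched_bounds hk hi.
apply: le_trans ei _; case: (ltnP j (M N a)) => jM; last first.
  have -> : j = M N a by lia.
  by rewrite endt_bsched_last ler_nat leq_end_level //; lia.
have [k' [hk' hj']] := @exists_block N a j ltac:(lia).
have kk' : (k < k')%N.
  by rewrite ltnNge; apply/negP => /(@leq_crit a k'.+1 k.+1); lia.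
have /andP[lo _] := endt_bsched_bounds hk' hj'.
by apply: le_trans lo; rewrite ler_nat leq_end_level //; lia.
Qed.

Lemma bsched_inversion [i j] : (1 <= i)%N -> (i < j <= M N a)%N ->
  endt N a bsched j < endt N a bsched i ->
  exists k, [/\ (1 <= k <= N)%N, i = crit a k, ~~ D k & (j < crit a k.+1)%N].
Proof.
move=> i1 hij lt_ji.
have [k [hk hi]] := @exists_block N a i ltac:(lia).
have jk : (j < crit a k.+1)%N.
  rewrite ltnNge; apply/negP => kj.
  by have := @endt_bsched_le_later k i j hk hi ltac:(lia); rewrite leNgt lt_ji.
have hj : (crit a k <= j < crit a k.+1)%N by lia.
move: lt_ji; rewrite (endt_bsched_block hk hi) (endt_bsched_block hk hj).
rewrite ltr_nat ifN_eq; last lia.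
have := delay_sumS k ltac:(lia); have := psum_pred a k ltac:(lia).
case: eqP => [ei | _]; last lia.
by case hD: (D k) => p1 p2 lt; [lia | exists k; rewrite hD].
Qed.

Lemma inversions_bsched_crit k : (1 <= k <= N)%N ->
  (inversions N a R bsched (crit a k) <= a k)%N.
Proof.
move=> hk; have hc := critS a k ltac:(lia).
apply: (@leq_trans (\sum_((crit a k).+1 <= j < (M N a).+1) (j < crit a k.+1))%N).
  rewrite /inversions big_nat_cond [X in (_ <= X)%N]big_nat_cond.
  apply: leq_sum => j /andP[hj _].
  case lt_j: (endt N a bsched j < endt N a bsched (crit a k)) => //=.
  have c1 : (1 <= crit a k)%N by have := leq_id_crit a k; lia.
  have [k' [_ /crit_inj <- _ jk]] := bsched_inversion c1 hj lt_j.
  by rewrite jk.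
by apply: leq_trans (sum_ltn_le _ _ _) _; lia.
Qed.

Lemma inversions_bsched_eq0 i : (1 <= i)%N ->
  i \notin [seq crit a k | k <- index_iota 1 N.+1 & ~~ D k] ->
  inversions N a R bsched i = 0%N.
Proof.
move=> i1 ni; rewrite /inversions big_nat_cond big1 // => j /andP[hj _].
case lt_j: (endt N a bsched j < endt N a bsched i) => //=.
have [k [hk ik hD _]] := bsched_inversion i1 hj lt_j.
by move: ni; rewrite ik map_f // mem_filter hD mem_index_iota; lia.
Qed.

Lemma Bcost_bsched : (Bcost N a bsched <= \sum_(1 <= k < N.+1 | ~~ D k) a k)%N.
Proof.
pose crits := [seq crit a k | k <- index_iota 1 N.+1 & ~~ D k].
apply: (@leq_trans (\sum_(i <- crits) inversions N a R bsched i)%N).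
  apply: (@leq_sum_support _ _ crits (inversions N a R bsched)); first exact: iota_uniq.
    by rewrite map_inj_uniq ?filter_uniq ?iota_uniq //; apply: crit_inj.
  by move=> i /[!mem_index_iota] hi; apply: inversions_bsched_eq0; lia.
rewrite big_map big_filter big_nat_cond [X in (_ <= X)%N]big_nat_cond.
by apply: leq_sum => k /andP[hk _]; apply: inversions_bsched_crit; lia.
Qed.

Lemma bsched_feasible W : (delay_sum N + W <= sumA N a)%N -> feasible N a W bsched.
Proof.
move=> hD; split; [|split] => [i _ | i /andP[i1 _] | i /andP[i1 iM]].
- exact: bsched_ge0.
- by rewrite bsched_step // lerDl; case: ifP => // _; apply: ler0n.
have levelH : (end_level N)%:R <= H N a R W.
  have : (end_level N + W <= 2 * sumA N a)%N by rewrite /end_level /sumA in hD *; lia.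
  by rewrite /H -(ler_nat R) !natrD addr0; lra.
apply: le_trans levelH; case: (ltnP i (M N a)) => lt_iM; last first.
  have -> : i = M N a by lia.
  by rewrite endt_bsched_last.
have [k [hk hi]] := @exists_block N a i ltac:(lia).
have /andP[_ ei] := endt_bsched_bounds hk hi.
by apply: le_trans ei _; rewrite ler_nat leq_end_level //; lia.
Qed.

End BlockSchedule.

Theorem lemma3 (R : realType) (N : nat) (a : nat -> nat) (W : nat) :
  (1 <= N)%N ->
  (forall j, (1 <= j <= N)%N -> (0 < a j)%N) ->
  (0 < W)%N -> (W <= sumA N a)%N ->
  exists A' : pred nat,
    (forall k, A' k -> (1 <= k <= N)%N) /\
    optimal N a W (block_start N a R A').
Proof.
move=> _ _ _ hW.
have [D [hD maxD]] := exists_max_subset_sum N a (sumA N a - W).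
exists (undelayed N D); split; first by move=> k /andP[].
split; first by apply: bsched_feasible; rewrite /delay_sum; lia.
move=> s hs; apply: leq_trans (Bcost_bsched N a R D) (leq_trans _ (Bcost_ge hs)).
have := delayed_weight_le hs; have := maxD (delayed a R s).
by rewrite /sumA /psum !sum_predC; lia.
Qed.
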